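(* Fix $\gamma \geq 1$ and $0 \leq \rho < 1$. Let $A(u,v) = (u,u+v)$, $\mathbf{1} = (1,1)$, $\mathbf{c} = (\gamma,1)$, and let $T,M:\mathbb{R}^2\to\mathbb{R}^2$ be defined by $$T\mathbf{x} = \begin{cases} A\mathbf{x} + \mathbf{1}, & \langle \mathbf{c},\mathbf{x}\rangle \leq -1/2,\\ A\mathbf{x}, & |\langle \mathbf{c},\mathbf{x}\rangle| < 1/2,\\ A\mathbf{x} - \mathbf{1}, & \langle \mathbf{c},\mathbf{x}\rangle \geq 1/2,\end{cases}\qquad M(u,v) = \begin{cases} T(\rho u,\rho v), & u \geq 0,\\ T(u,v), & u<0.\end{cases}$$ Let $S = S^+\cup S^-$ where $S^+ = \{(u,v) : -1/2 \leq \gamma u + v \leq 1/2 + \gamma,\ 0 \leq u < 1\}$ and $S^- = \{(u,v) : -(1/2+\gamma) \leq \gamma u + v \leq 1/2,\ -1 \leq u < 0\}$. Suppose $(u_0,v_0) \in S$ and let $(u_n,v_n) = M^n(u_0,v_0)$. Let $\mathcal{I}^+ = \{n \geq 0 : u_n \geq 0\}$. Then the subsequence $(u_n)_{n\in\mathcal{I}^+}$ converges to zero as $n\to\infty$.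
   Context: $\langle\cdot,\cdot\rangle$ is the standard inner product on $\mathbb{R}^2$. *)

From Stdlib Require Import Reals.
Open Scope R_scope.

Definition vec2 := (R * R)%type.

Definition inner (x y : vec2) : R := fst x * fst y + snd x * snd y.

Definition Amap (x : vec2) : vec2 := (fst x, fst x + snd x).

Definition one2 : vec2 := (1, 1).
Definition cvec (gamma : R) : vec2 := (gamma, 1).

Definition vadd (x y : vec2) : vec2 := (fst x + fst y, snd x + snd y).
Definition vsub (x y : vec2) : vec2 := (fst x - fst y, snd x - snd y).

Definition Tmap (gamma : R) (x : vec2) : vec2 :=
  let s := inner (cvec gamma) x in
  if Rle_dec s (-(1/2)) then vadd (Amap x) one2
  else if Rlt_dec (Rabs s) (1/2) then Amap x
  else vsub (Amap x) one2.

Definition Mmap (gamma rho : R) (x : vec2) : vec2 :=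
  if Rle_dec 0 (fst x) then Tmap gamma (rho * fst x, rho * snd x)
  else Tmap gamma x.

Definition Splus (gamma : R) (x : vec2) : Prop :=
  -(1/2) <= gamma * fst x + snd x <= 1/2 + gamma /\ 0 <= fst x < 1.

Definition Sminus (gamma : R) (x : vec2) : Prop :=
  -(1/2 + gamma) <= gamma * fst x + snd x <= 1/2 /\ -1 <= fst x < 0.

Definition Sset (gamma : R) (x : vec2) : Prop := Splus gamma x \/ Sminus gamma x.

Definition orbit (gamma rho : R) (x0 : vec2) (n : nat) : vec2 :=
  Nat.iter n (Mmap gamma rho) x0.

(** Translate the first coordinate into [0, 1): [phase (u, v) = u] for
    [u >= 0] and [phase (u, v) = u + 1] for [u < 0].  The part [Sinv] of [S]
    where [gamma u + v < 1/2] (all of [S+] and all of [S-] but its upper edge)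
    is invariant under [M], and [M] multiplies the phase by [rho] at every
    step with [u >= 0] and leaves it unchanged otherwise.  Hence the phase is
    nonincreasing and gains a factor [rho] at each visit to [u >= 0], so
    along these visits [u_n = phase_n -> 0].  An orbit started on the
    upper edge of [S-] enters the invariant part within five steps. *)

From Stdlib Require Import Reals Lra Lia Psatz Classical.
Open Scope R_scope.

Definition tends_to_0_on_nonneg (a : nat -> R) : Prop :=
  forall eps, 0 < eps ->
    exists N, forall n, (N <= n)%nat -> 0 <= a n -> Rabs (a n) < eps.

Lemma tends_to_0_on_nonneg_shift (a b : nat -> R) (j : nat) :
  (forall n, b n = a (n + j)%nat) ->
  tends_to_0_on_nonneg b -> tends_to_0_on_nonneg a.
Proof.
  intros hb hlim eps heps.
  destruct (hlim eps heps) as [N HN].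
  exists (N + j)%nat; intros n hn ha.
  replace n with (n - j + j)%nat in * by lia.
  rewrite <- hb in *; apply HN; [lia | exact ha].
Qed.

Section Decay.

Variables (p : nat -> R) (Q : nat -> Prop) (rho : R).
Hypothesis rho_ge0 : 0 <= rho.
Hypothesis p_le1 : forall n, p n <= 1.
Hypothesis p_nonincreasing : forall n, p (S n) <= p n.
Hypothesis p_contracts : forall n, Q n -> p (S n) <= rho * p n.

Lemma nonincreasing_add_le (k n : nat) : p (k + n) <= p n.
Proof.
  induction k as [|k IH]; simpl; [lra|].
  eapply Rle_trans; [apply p_nonincreasing | exact IH].
Qed.

Lemma eventually_le_pow_on (m : nat) :
  exists N, forall n, (N <= n)%nat -> Q n -> p n <= rho ^ m.
Proof.
  induction m as [|m [N HN]].
  - exists 0%nat; intros n _ _; simpl; apply p_le1.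
  - destruct (classic (exists n1, (N <= n1)%nat /\ Q n1)) as [[n1 [hn1 hQ]]|none].
    + exists (S n1); intros n hn _.
      replace n with (n - S n1 + S n1)%nat by lia.
      eapply Rle_trans; [apply nonincreasing_add_le|].
      eapply Rle_trans; [apply p_contracts, hQ|].
      simpl; apply Rmult_le_compat_l; [exact rho_ge0 | now apply HN].
    + exists N; intros n hn hQ; exfalso; eauto.
Qed.

Lemma eventually_lt_on (eps : R) : rho < 1 -> 0 < eps ->
  exists N, forall n, (N <= n)%nat -> Q n -> p n < eps.
Proof.
  intros rho_lt1 heps.
  destruct (pow_lt_1_zero rho) with (y := eps) as [m Hm];
    [rewrite Rabs_right; lra | exact heps |].
  destruct (eventually_le_pow_on m) as [N HN].
  exists N; intros n hn hQ.
  specialize (Hm m (le_n m)).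
  rewrite Rabs_right in Hm by (apply Rle_ge, pow_le; exact rho_ge0).
  specialize (HN n hn hQ); lra.
Qed.

End Decay.

Section Dynamics.

Variables gamma rho : R.
Hypothesis gamma_ge1 : 1 <= gamma.
Hypothesis rho_bounds : 0 <= rho < 1.

Lemma Tmap_low u v :
  gamma*u + v <= -(1/2) -> Tmap gamma (u, v) = (u + 1, u + v + 1).
Proof.
  intros h; unfold Tmap, inner, cvec, Amap, vadd, one2; simpl.
  destruct (Rle_dec _ _); [reflexivity | lra].
Qed.

Lemma Tmap_mid u v :
  -(1/2) < gamma*u + v < 1/2 -> Tmap gamma (u, v) = (u, u + v).
Proof.
  intros h; unfold Tmap, inner, cvec, Amap; simpl.
  destruct (Rle_dec _ _); [lra|].
  destruct (Rlt_dec _ _) as [|hn]; [reflexivity|].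
  exfalso; apply hn, Rabs_def1; lra.
Qed.

Lemma Tmap_high u v :
  1/2 <= gamma*u + v -> Tmap gamma (u, v) = (u - 1, u + v - 1).
Proof.
  intros h; unfold Tmap, inner, cvec, Amap, vsub, one2; simpl.
  destruct (Rle_dec _ _); [lra|].
  destruct (Rlt_dec _ _) as [habs|]; [|reflexivity].
  apply Rabs_def2 in habs; lra.
Qed.

Inductive Tmap_spec u v : vec2 -> Prop :=
  | TmapLow : gamma*u + v <= -(1/2) -> Tmap_spec u v (u + 1, u + v + 1)
  | TmapMid : -(1/2) < gamma*u + v < 1/2 -> Tmap_spec u v (u, u + v)
  | TmapHigh : 1/2 <= gamma*u + v -> Tmap_spec u v (u - 1, u + v - 1).

Lemma TmapP u v : Tmap_spec u v (Tmap gamma (u, v)).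
Proof.
  destruct (Rle_dec (gamma*u + v) (-(1/2))) as [h|h].
  - rewrite Tmap_low by exact h; now constructor.
  - destruct (Rlt_dec (gamma*u + v) (1/2)).
    + rewrite Tmap_mid by lra; constructor; lra.
    + rewrite Tmap_high by lra; constructor; lra.
Qed.

Lemma Mmap_nonneg u v : 0 <= u -> Mmap gamma rho (u, v) = Tmap gamma (rho*u, rho*v).
Proof. intros h; unfold Mmap; simpl; now destruct (Rle_dec 0 u). Qed.

Lemma Mmap_neg u v : u < 0 -> Mmap gamma rho (u, v) = Tmap gamma (u, v).
Proof. intros h; unfold Mmap; simpl; destruct (Rle_dec 0 u); [lra | reflexivity]. Qed.

Definition Sinv (x : vec2) : Prop :=
  Splus gamma x \/ (Sminus gamma x /\ gamma * fst x + snd x < 1/2).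

Definition phase (x : vec2) : R :=
  if Rle_dec 0 (fst x) then fst x else fst x + 1.

Lemma phase_bounds x : Sinv x -> 0 <= phase x < 1.
Proof.
  destruct x as [u v]; unfold Sinv, Splus, Sminus, phase; simpl.
  destruct (Rle_dec 0 u); lra.
Qed.

Lemma phase_nonneg x : 0 <= fst x -> phase x = fst x.
Proof. unfold phase; now destruct (Rle_dec 0 (fst x)). Qed.

Lemma Sinv_Mmap x : Sinv x ->
  Sinv (Mmap gamma rho x) /\
  phase (Mmap gamma rho x) = if Rle_dec 0 (fst x) then rho * phase x else phase x.
Proof.
  destruct x as [u v]; unfold Sinv, Splus, Sminus, phase; simpl; intros hS.
  destruct (Rle_dec 0 u) as [hu|hu].
  - rewrite Mmap_nonneg by exact hu.
    destruct (TmapP (rho*u) (rho*v)) as [hs|hs|hs]; simpl;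
      repeat destruct (Rle_dec _ _); (split; [|try lra]);
      try (exfalso; nra); nra.
  - rewrite Mmap_neg by lra.
    destruct (TmapP u v) as [hs|hs|hs]; simpl;
      repeat destruct (Rle_dec _ _); (split; [|try lra]);
      try (exfalso; nra); nra.
Qed.

Lemma orbit_succ x n : orbit gamma rho x (S n) = Mmap gamma rho (orbit gamma rho x n).
Proof. reflexivity. Qed.

Lemma orbit_add x m n : orbit gamma rho x (m + n) = orbit gamma rho (orbit gamma rho x n) m.
Proof. unfold orbit; apply Nat.iter_add. Qed.

Lemma Sinv_orbit x n : Sinv x -> Sinv (orbit gamma rho x n).
Proof.
  intros hx; induction n as [|n IH]; [exact hx|].
  rewrite orbit_succ; exact (proj1 (Sinv_Mmap _ IH)).
Qed.

Lemma orbit_tends_to_0_on_nonneg x : Sinv x ->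
  tends_to_0_on_nonneg (fun n => fst (orbit gamma rho x n)).
Proof.
  intros hx eps heps.
  set (p n := phase (orbit gamma rho x n)).
  set (Q n := 0 <= fst (orbit gamma rho x n)).
  assert (hstep : forall n, Sinv (orbit gamma rho x n) /\
    p (S n) = if Rle_dec 0 (fst (orbit gamma rho x n)) then rho * p n else p n).
  { intros n; unfold p; rewrite orbit_succ.
    pose proof (Sinv_orbit x n hx) as hn; split; [exact hn | apply (Sinv_Mmap _ hn)]. }
  assert (hp : forall n, 0 <= p n < 1) by (intros n; apply phase_bounds, hstep).
  destruct (eventually_lt_on p Q rho (proj1 rho_bounds)) with (eps := eps)
    as [N HN].
  - intros n; specialize (hp n); lra.
  - intros n; destruct (hstep n) as [_ ->]; pose proof (hp n).
    destruct (Rle_dec _ _); nra.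
  - intros n hQ; destruct (hstep n) as [_ ->].
    destruct (Rle_dec _ _); [lra | contradiction].
  - exact (proj2 rho_bounds).
  - exact heps.
  - exists N; intros n hn hQ.
    rewrite Rabs_right by lra.
    unfold p in HN; rewrite <- phase_nonneg by exact hQ; now apply HN.
Qed.

Definition reaches_Sinv (x : vec2) : Prop := exists j, Sinv (orbit gamma rho x j).

Lemma Sinv_reaches x : Sinv x -> reaches_Sinv x.
Proof. now exists 0%nat. Qed.

Lemma reaches_Sinv_Mmap x : reaches_Sinv (Mmap gamma rho x) -> reaches_Sinv x.
Proof.
  intros [j hj]; exists (S j).
  replace (S j) with (j + 1)%nat by lia; now rewrite orbit_add.
Qed.

(* [gamma w + v = 3 w + gamma - 5/2] is what three steps from the upper edge
   of [S-] produce when the orbit jumps over [S-]. *)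
Lemma boundary_tail_reaches w v :
  0 <= w -> gamma*w + v = 3*w + gamma - 5/2 -> gamma*w + v < -(1/2) ->
  reaches_Sinv (w, v).
Proof.
  intros hw hs hneg.
  apply reaches_Sinv_Mmap; rewrite Mmap_nonneg by exact hw.
  destruct (Rle_dec (rho * (gamma*w + v)) (-(1/2))) as [hlow|hmid].
  2: { rewrite Tmap_mid by nra; apply Sinv_reaches; left; split; simpl; nra. }
  rewrite Tmap_low by nra.
  apply reaches_Sinv_Mmap; rewrite Mmap_nonneg by nra.
  rewrite Tmap_high by nra.
  apply Sinv_reaches; unfold Sinv, Splus, Sminus; simpl.
  destruct (Rle_dec 0 (rho * (rho*w + 1) - 1)); [left | right]; nra.
Qed.

Lemma boundary_reaches u :
  -1 <= u < 0 -> reaches_Sinv (u, 1/2 - gamma*u).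
Proof.
  intros hu.
  apply reaches_Sinv_Mmap; rewrite Mmap_neg by lra; rewrite Tmap_high by lra.
  apply reaches_Sinv_Mmap; rewrite Mmap_neg by lra; rewrite Tmap_low by lra.
  destruct (Rle_dec (-(1/2 + gamma)) (2*u - 1/2)).
  { apply Sinv_reaches; right; unfold Sminus; simpl; lra. }
  apply reaches_Sinv_Mmap; rewrite Mmap_neg by lra; rewrite Tmap_low by lra.
  destruct (Rle_dec (-(1/2)) (3*(u + 1) + gamma - 5/2)).
  { apply Sinv_reaches; left; unfold Splus; simpl; lra. }
  apply boundary_tail_reaches; lra.
Qed.

Lemma Sset_reaches_Sinv x : Sset gamma x -> reaches_Sinv x.
Proof.
  destruct x as [u v]; intros hS.
  destruct (Rlt_dec (gamma*u + v) (1/2)) as [hlt|hge].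
  - apply Sinv_reaches; unfold Sinv, Sset in *; simpl; tauto.
  - destruct hS as [hS|[hs hu]]; [now apply Sinv_reaches; left|].
    simpl in *; replace v with (1/2 - gamma*u) by lra.
    apply boundary_reaches; exact hu.
Qed.

End Dynamics.

Theorem lemma1 (gamma rho : R) (hgamma : 1 <= gamma) (hrho : 0 <= rho < 1)
  (u0 v0 : R) (hS : Sset gamma (u0, v0)) :
  forall eps : R, 0 < eps ->
    exists N : nat, forall n : nat, (N <= n)%nat ->
      0 <= fst (orbit gamma rho (u0, v0) n) ->
      Rabs (fst (orbit gamma rho (u0, v0) n)) < eps.
Proof.
  destruct (Sset_reaches_Sinv gamma rho hgamma hrho _ hS) as [j hj].
  apply (tends_to_0_on_nonneg_shift (fun n => fst (orbit gamma rho (u0, v0) n))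
           (fun n => fst (orbit gamma rho (orbit gamma rho (u0, v0) j) n)) j).
  - intros n; now rewrite orbit_add.
  - exact (orbit_tends_to_0_on_nonneg gamma rho hgamma hrho _ hj).
Qed.
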